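(* Let $Q$ be an automorphic loop and $x,y\in Q$. If either $x^{-1}(xy^2)=(xy)(x^{-1}y)$ or $x^{-1}(xy^2)=(x^{-1}y)(xy)$, then $xy=yx$.
   Context: A loop is a set with a binary operation in which all equations $ax=b$, $ya=b$ are uniquely solvable and which has a two-sided identity. For $a\in L$, $R_a:x\mapsto xa$, $L_a:x\mapsto ax$; the inner mapping group is the stabilizer of the identity in the group generated by all $R_a,L_a$. A loop is automorphic if every inner mapping is an automorphism. Automorphic loops are power associative, so $x^{-1}$ and $y^2$ are well defined. *)

Section Loops.
Variable T : Type.
Variable mul : T -> T -> T.
Variable e : T.

Definition is_loop : Prop :=
  (forall a b : T, exists x, mul a x = b /\ forall x', mul a x' = b -> x' = x) /\
  (forall a b : T, exists y, mul y a = b /\ forall y', mul y' a = b -> y' = y) /\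
  (forall x : T, mul e x = x /\ mul x e = x).

Definition Rmap (a : T) : T -> T := fun x => mul x a.
Definition Lmap (a : T) : T -> T := fun x => mul a x.

(* The multiplication group: the subgroup of Sym(T) generated by all R_a, L_a
   (closed under identity, composition and two-sided inverses). *)
Inductive in_mlt : (T -> T) -> Prop :=
| mlt_R a : in_mlt (Rmap a)
| mlt_L a : in_mlt (Lmap a)
| mlt_id : in_mlt (fun x => x)
| mlt_comp f g : in_mlt f -> in_mlt g -> in_mlt (fun x => f (g x))
| mlt_inv f g : in_mlt f -> (forall x, g (f x) = x) -> (forall x, f (g x) = x) ->
                in_mlt g.

Definition inner_mapping (f : T -> T) : Prop := in_mlt f /\ f e = e.

(* Automorphism of the loop (elements of the multiplication group are already bijections). *)
Definition is_automorphism (f : T -> T) : Prop :=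
  (exists g : T -> T, (forall x, g (f x) = x) /\ (forall x, f (g x) = x)) /\
  (forall x y, f (mul x y) = mul (f x) (f y)).

Definition automorphic_loop : Prop :=
  is_loop /\ forall f, inner_mapping f -> is_automorphism f.

End Loops.

From Stdlib Require Import ClassicalEpsilon.

(* Let a be the inverse of x.  The inner mapping R_{x,c} : z |-> ((z x) c) / (x c) fixes c
   (flexibility) and sends a to c / (x c); for c = a y this forces R_{x,c}(y) = x c, i.e.
   (y x)(a y) = (x (a y))^2.  Since L_x L_a = L_a L_x is an automorphism, the right-hand side
   is a (x y^2); symmetrically (y a)(x y) = a (x y^2).  The first hypothesis then cancels to
   x y = y x, and the second to a y = y a.  In the latter case c = a y commutes with a and y,
   so T_c fixes x and y, hence y x; but (y x) c = (y a)(x y) = c (x y) says T_c(y x) = x y. *)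

Section AutomorphicLoop.

Variables (T : Type) (mul : T -> T -> T) (e : T).
Hypothesis HQ : automorphic_loop T mul e.

Local Notation "x · y" := (mul x y) (at level 40, left associativity).

Definition ldiv (u v : T) : T :=
  proj1_sig (constructive_indefinite_description _ (proj1 (proj1 HQ) u v)).
Definition rdiv (v u : T) : T :=
  proj1_sig (constructive_indefinite_description _ (proj1 (proj2 (proj1 HQ)) u v)).

Local Notation "u \ v" := (ldiv u v) (at level 40, left associativity).
Local Notation "v / u" := (rdiv v u).

Lemma mul_ldiv u v : u · (u \ v) = v.
Proof.
  unfold ldiv; destruct (constructive_indefinite_description _ _) as [z Hz]; exact (proj1 Hz).
Qed.

Lemma ldiv_mul u v : u \ (u · v) = v.
Proof.
  unfold ldiv; destruct (constructive_indefinite_description _ _) as [z Hz].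
  symmetry; apply (proj2 Hz); reflexivity.
Qed.

Lemma mul_rdiv v u : (v / u) · u = v.
Proof.
  unfold rdiv; destruct (constructive_indefinite_description _ _) as [z Hz]; exact (proj1 Hz).
Qed.

Lemma rdiv_mul v u : (v · u) / u = v.
Proof.
  unfold rdiv; destruct (constructive_indefinite_description _ _) as [z Hz].
  symmetry; apply (proj2 Hz); reflexivity.
Qed.

Lemma mul1x u : e · u = u.
Proof. exact (proj1 (proj2 (proj2 (proj1 HQ)) u)). Qed.

Lemma mulx1 u : u · e = u.
Proof. exact (proj2 (proj2 (proj2 (proj1 HQ)) u)). Qed.

Lemma mul_cancel_l u v w : u · v = u · w -> v = w.
Proof. intro H; rewrite <- (ldiv_mul u v), H; apply ldiv_mul. Qed.

Lemma mul_cancel_r u v w : v · u = w · u -> v = w.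
Proof. intro H; rewrite <- (rdiv_mul v u), H; apply rdiv_mul. Qed.

Lemma ldiv1x v : e \ v = v.
Proof. apply (mul_cancel_l e); rewrite mul_ldiv, mul1x; reflexivity. Qed.

Lemma ldiv_diag u : u \ u = e.
Proof. apply (mul_cancel_l u); rewrite mul_ldiv, mulx1; reflexivity. Qed.

Lemma rdiv_diag u : u / u = e.
Proof. apply (mul_cancel_r u); rewrite mul_rdiv, mul1x; reflexivity. Qed.

Lemma in_mlt_ldiv u : in_mlt T mul (ldiv u).
Proof. apply (mlt_inv _ _ (Lmap T mul u)); [apply mlt_L | apply ldiv_mul | apply mul_ldiv]. Qed.

Lemma in_mlt_rdiv u : in_mlt T mul (fun z => z / u).
Proof.
  apply (mlt_inv _ _ (Rmap T mul u)); [apply mlt_R | intro z; apply rdiv_mul | intro z; apply mul_rdiv].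
Qed.

Lemma inner_mapping_mul (f : T -> T) :
  in_mlt T mul f -> f e = e -> forall u v, f (u · v) = f u · f v.
Proof. intros Hf He; exact (proj2 (proj2 HQ f (conj Hf He))). Qed.

Definition L_inner (p q z : T) : T := (q · p) \ (q · (p · z)).
Definition R_inner (p q z : T) : T := ((z · p) · q) / (p · q).
Definition T_inner (p z : T) : T := p \ (z · p).

Lemma L_inner_mul p q u v : L_inner p q (u · v) = L_inner p q u · L_inner p q v.
Proof.
  apply inner_mapping_mul.
  - apply (mlt_comp _ _ (ldiv (q · p)) (fun z => q · (p · z))); [apply in_mlt_ldiv |].
    apply (mlt_comp _ _ (Lmap T mul q) (Lmap T mul p)); apply mlt_L.
  - unfold L_inner; rewrite mulx1; apply ldiv_diag.
Qed.

Lemma R_inner_mul p q u v : R_inner p q (u · v) = R_inner p q u · R_inner p q v.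
Proof.
  apply inner_mapping_mul.
  - apply (mlt_comp _ _ (fun z => z / (p · q)) (fun z => (z · p) · q)); [apply in_mlt_rdiv |].
    apply (mlt_comp _ _ (Rmap T mul q) (Rmap T mul p)); apply mlt_R.
  - unfold R_inner; rewrite mul1x; apply rdiv_diag.
Qed.

Lemma T_inner_mul p u v : T_inner p (u · v) = T_inner p u · T_inner p v.
Proof.
  apply inner_mapping_mul.
  - apply (mlt_comp _ _ (ldiv p) (Rmap T mul p)); [apply in_mlt_ldiv | apply mlt_R].
  - unfold T_inner; rewrite mul1x; apply ldiv_diag.
Qed.

Lemma T_inner_fixE p q : T_inner p q = q <-> q · p = p · q.
Proof.
  unfold T_inner; split.
  - intro H; rewrite <- H at 2; apply eq_sym, mul_ldiv.
  - intro H; rewrite H; apply ldiv_mul.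
Qed.

Lemma morph_fix_inv (f : T -> T) p q :
  (forall u v, f (u · v) = f u · f v) -> f e = e -> f p = p -> p · q = e -> f q = q.
Proof.
  intros Hf He Hp Hpq; apply (mul_cancel_l p).
  rewrite <- Hp at 1; rewrite <- Hf, Hpq; exact He.
Qed.

Lemma T_inner_e p : T_inner p e = e.
Proof. unfold T_inner; rewrite mul1x; apply ldiv_diag. Qed.

Lemma flexible p q : (p · q) · p = p · (q · p).
Proof.
  assert (Hp : T_inner p p = p) by (apply T_inner_fixE; reflexivity).
  pose proof (T_inner_mul p p q) as H; rewrite Hp in H.
  unfold T_inner in H; rewrite mul_ldiv in H.
  rewrite <- (mul_ldiv p ((p · q) · p)), H; reflexivity.
Qed.

Lemma mul_inv_sym x a : x · a = e -> a · x = e.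
Proof.
  intro Hxa; rewrite <- Hxa; apply T_inner_fixE.
  apply (morph_fix_inv (T_inner x) x); [apply T_inner_mul | apply T_inner_e | | exact Hxa].
  apply T_inner_fixE; reflexivity.
Qed.

Section Inverse.

Variables x a : T.
Hypothesis Hxa : x · a = e.

Let Hax : a · x = e := mul_inv_sym x a Hxa.

Lemma mulLL_morph u v : x · (a · (u · v)) = (x · (a · u)) · (x · (a · v)).
Proof.
  pose proof (L_inner_mul a x u v) as H; unfold L_inner in H.
  rewrite Hxa, !ldiv1x in H; exact H.
Qed.

(* [L_x L_a] is an automorphism fixing [x], hence commutes with [L_x]. *)
Lemma inv_commute z : a · (x · z) = x · (a · z).
Proof.
  apply (mul_cancel_l x); rewrite mulLL_morph.
  rewrite Hax, mulx1; reflexivity.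
Qed.

Lemma square_identity y : (y · x) · (a · y) = (x · (a · y)) · (x · (a · y)).
Proof.
  set (c := a · y).
  assert (Hc : R_inner x c c = c).
  { unfold R_inner; rewrite flexible; apply rdiv_mul. }
  assert (Ha : R_inner x c a = c / (x · c)).
  { unfold R_inner; rewrite Hax, mul1x; reflexivity. }
  assert (Hy : R_inner x c y = x · c).
  { apply (mul_cancel_l (c / (x · c))); rewrite <- Ha at 1; rewrite <- R_inner_mul.
    fold c; rewrite Hc, mul_rdiv; reflexivity. }
  rewrite <- Hy at 1; unfold R_inner; rewrite mul_rdiv; reflexivity.
Qed.

End Inverse.

Lemma inv_square_l x a y : x · a = e -> a · (x · (y · y)) = (y · x) · (a · y).
Proof.
  intro Hxa; rewrite inv_commute, mulLL_morph, square_identity by exact Hxa; reflexivity.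
Qed.

Lemma inv_square_r x a y : x · a = e -> a · (x · (y · y)) = (y · a) · (x · y).
Proof.
  intro Hxa; apply mul_inv_sym in Hxa.
  rewrite mulLL_morph, square_identity by exact Hxa; reflexivity.
Qed.

Lemma commute_inv x a y : x · a = e -> a · y = y · a -> x · y = y · x.
Proof.
  intros Hxa Hay; set (c := a · y).
  assert (Hcy : y · c = c · y) by (unfold c; rewrite Hay at 2; apply eq_sym, flexible).
  assert (Hca : a · c = c · a) by (unfold c; rewrite Hay at 1; apply eq_sym, flexible).
  assert (Hx : T_inner c x = x).
  { apply (morph_fix_inv (T_inner c) a); [apply T_inner_mul | apply T_inner_e | |].
    - apply T_inner_fixE, Hca.
    - exact (mul_inv_sym x a Hxa). }
  assert (Hyx : (y · x) · c = c · (x · y)).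
  { unfold c; rewrite <- (inv_square_l x a y Hxa), (inv_square_r x a y Hxa), Hay.
    reflexivity. }
  transitivity (T_inner c (y · x)).
  - unfold T_inner; rewrite Hyx; apply eq_sym, ldiv_mul.
  - rewrite T_inner_mul, Hx, (proj2 (T_inner_fixE c y) Hcy); reflexivity.
Qed.

End AutomorphicLoop.

Theorem corollary3p1 (T : Type) (mul : T -> T -> T) (e : T)
  (HQ : automorphic_loop T mul e) (x y xinv : T)
  (Hxinv : mul x xinv = e) :
  (mul xinv (mul x (mul y y)) = mul (mul x y) (mul xinv y) \/
   mul xinv (mul x (mul y y)) = mul (mul xinv y) (mul x y)) ->
  mul x y = mul y x.
Proof.
  intros [H | H].
  - apply (mul_cancel_r T mul e HQ (mul xinv y)).
    rewrite <- H; apply (inv_square_l T mul e HQ x xinv y Hxinv).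
  - apply (commute_inv T mul e HQ x xinv y Hxinv), eq_sym.
    apply (mul_cancel_r T mul e HQ (mul x y)).
    rewrite <- H; apply eq_sym, (inv_square_r T mul e HQ x xinv y Hxinv).
Qed.
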